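(* Let $F$ be analytic in the unit disk $\mathbb{D}$. If $F f \in \mathcal{P}$ for every $f \in \mathcal{P}$ (that is, the weighted composition transformation $T_{F,\varphi}$ with $\varphi(z)=z$ preserves $\mathcal{P}$), then $F \equiv 1$.
   Context: $\mathbb{D}$ is the open unit disk. $\mathcal{P}$ (the Carathéodory class) is the set of all analytic functions $f$ on $\mathbb{D}$ with $\mathrm{Re}\, f>0$ on $\mathbb{D}$ and $f(0)=1$. For $F$ analytic in $\mathbb{D}$ and $\varphi$ an analytic self-map of $\mathbb{D}$, $T_{F,\varphi}(f)=F\cdot(f\circ\varphi)$; it preserves $\mathcal{P}$ if $T_{F,\varphi}(f)\in\mathcal{P}$ for all $f\in\mathcal{P}$. *)

From Stdlib Require Import Reals.
From Coquelicot Require Import Coquelicot.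
Open Scope R_scope.

Definition unit_disk (z : C) : Prop := Cmod z < 1.

Definition analytic_on_disk (f : C -> C) : Prop :=
  forall z, unit_disk z -> @ex_derive C_AbsRing C_NormedModule f z.

Definition caratheodory (f : C -> C) : Prop :=
  analytic_on_disk f /\
  (forall z, unit_disk z -> 0 < Re (f z)) /\
  f (RtoC 0) = RtoC 1.

Definition wcomp (F phi f : C -> C) : C -> C := fun z => Cmult (F z) (f (phi z)).

Definition preserves_P (F phi : C -> C) : Prop :=
  forall f, caratheodory f -> caratheodory (wcomp F phi f).

(** Every power [F^n] is obtained from the constant [1] by applying [T_{F,id}] [n] times,
    so [Re (F z ^ n) > 0] for all [n]. If [F z = a + ib] with [b <> 0], each squaring at
    least quadruples [(b/a)^2], while positivity of the real part of the next square keeps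
    this ratio below [1]; hence [F] is real-valued on the disk. A real-valued holomorphic
    function has vanishing derivative (compare the real and imaginary directions), so [F]
    is constant along every radius, and [F 0 = 1] gives [F = 1]. *)

From Stdlib Require Import Reals Lra Lia.
From Coquelicot Require Import Coquelicot.
Open Scope R_scope.

Lemma Im_le_Cmod (c : C) : Rabs (Im c) <= Cmod c.
Proof. eapply Rle_trans; [apply Rmax_r | apply Rmax_Cmod]. Qed.

Lemma eq_0_of_Rabs_le_posreal (x : R) : (forall eps : posreal, Rabs x <= eps) -> x = 0.
Proof.
intros Hx. destruct (Req_dec x 0) as [|Hnz]; [easy|].
pose proof (Rabs_pos_lt x Hnz) as Hpos.
assert (Hhalf : 0 < Rabs x / 2) by lra.
specialize (Hx (mkposreal _ Hhalf)); simpl in Hx. lra.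
Qed.

Lemma eq_0_of_pow4_mul_lt_1 (x : R) : 0 <= x -> (forall m, 4 ^ m * x < 1) -> x = 0.
Proof.
intros Hx0 Hlt. destruct (Rle_lt_or_eq_dec 0 x Hx0) as [Hpos|]; [|easy].
destruct (Pow_x_infinity 4 ltac:(rewrite Rabs_pos_eq; lra) (/ x)) as [N HN].
specialize (HN N (le_n N)). specialize (Hlt N).
rewrite Rabs_pos_eq in HN by (apply pow_le; lra).
apply Rge_le, (Rmult_le_compat_r x) in HN; [|lra]. rewrite Rinv_l in HN; lra.
Qed.

Definition tan_sq (w : C) : R := (Im w / Re w) ^ 2.

Lemma tan_sq_lt_1 (w : C) : 0 < Re w -> 0 < Re (w * w)%C -> tan_sq w < 1.
Proof.
destruct w as [a b]; unfold tan_sq; cbn [Cmult Re Im fst snd]; intros Ha Hsq.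
replace ((b / a) ^ 2) with (b * b / (a * a)) by (field; nra).
apply Rmult_lt_reg_r with (a * a); [nra|].
replace (b * b / (a * a) * (a * a)) with (b * b) by (field; nra). nra.
Qed.

(** Squaring doubles the argument, hence at least quadruples its squared tangent. *)
Lemma tan_sq_mul_self (w : C) :
  0 < Re w -> 0 < Re (w * w)%C -> 4 * tan_sq w <= tan_sq (w * w)%C.
Proof.
destruct w as [a b]; unfold tan_sq; cbn [Cmult Re Im fst snd]; intros Ha Hsq.
set (D := a * a - b * b) in *.
replace (4 * (b / a) ^ 2) with (4 * (b * b) / (a * a)) by (field; nra).
replace (((a * b + b * a) / D) ^ 2) with (4 * (b * b) * (a * a) / (D * D)) by (field; nra).
assert (HD : D <= a * a) by (unfold D; nra).
apply Rmult_le_reg_r with (a * a * (D * D)); [repeat apply Rmult_lt_0_compat; lra|].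
replace (4 * (b * b) / (a * a) * (a * a * (D * D))) with (4 * (b * b) * (D * D)) by (field; nra).
replace (4 * (b * b) * (a * a) / (D * D) * (a * a * (D * D)))
  with (4 * (b * b) * ((a * a) * (a * a))) by (field; nra).
apply Rmult_le_compat_l; nra.
Qed.

Lemma Im_eq_0_of_Re_pow_pos (w : C) : (forall n, 0 < Re (w ^ n)%C) -> Im w = 0.
Proof.
intros Hpos.
set (u := fun m => (w ^ (2 ^ m))%C).
assert (Hu : forall m, u (S m) = (u m * u m)%C).
{ intros m. unfold u. rewrite <- Cpow_add_r. f_equal. simpl. lia. }
assert (Hgrow : forall m, 4 ^ m * tan_sq w <= tan_sq (u m)).
{ induction m as [|m IH].
  - unfold u; simpl. rewrite Cmult_1_r. lra.
  - rewrite Hu. simpl pow.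
    pose proof (tan_sq_mul_self (u m) (Hpos _) ltac:(rewrite <- Hu; apply Hpos)). lra. }
assert (Hsmall : forall m, 4 ^ m * tan_sq w < 1).
{ intros m. eapply Rle_lt_trans; [apply Hgrow|].
  apply tan_sq_lt_1; [apply Hpos | rewrite <- Hu; apply Hpos]. }
assert (Hw : 0 < Re w) by (rewrite <- (Cpow_1_r w); apply Hpos).
apply eq_0_of_pow4_mul_lt_1 in Hsmall; [|unfold tan_sq; apply pow2_ge_0].
destruct (Req_dec (Im w) 0) as [|Hnz]; [easy|]. exfalso.
apply (pow_nonzero (Im w / Re w) 2); [|exact Hsmall].
apply Rmult_integral_contrapositive_currified; [easy | apply Rinv_neq_0_compat; lra].
Qed.

Lemma is_derive_C_approx (F : C -> C) (z l : C) :
  @is_derive C_AbsRing C_NormedModule F z l ->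
  forall eps : posreal, exists d : posreal, forall h : C, Cmod h < d ->
    Cmod (F (z + h) - F z - h * l)%C <= eps * Cmod h.
Proof.
intros [_ Hd] eps.
destruct (Hd z (fun P H => H) eps) as [d Hd']. exists d. intros h Hh.
specialize (Hd' (z + h)%C).
unfold ball in Hd'; simpl in Hd'. unfold AbsRing_ball in Hd'.
unfold minus, plus, opp, scal in Hd'; simpl in Hd'. unfold mult in Hd'; simpl in Hd'.
replace (z + h + - z)%C with h in Hd' by ring.
replace (F (z + h) - F z - h * l)%C with (F (z + h) + - F z + - (h * l))%C by ring.
exact (Hd' Hh).
Qed.

(** Moving in the real and in the imaginary direction, [Im (h * l)] is [o(h)] only if [l = 0]. *)
Lemma is_derive_eq_0_of_Im_eq_0 (F : C -> C) (z l : C) (r : R) :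
  0 < r -> (forall h, Cmod h < r -> Im (F (z + h)%C) = 0) ->
  @is_derive C_AbsRing C_NormedModule F z l -> l = 0%C.
Proof.
intros Hr HIm Hder.
assert (HImz : Im (F z) = 0).
{ rewrite <- (Cplus_0_r z). apply HIm. rewrite Cmod_0. lra. }
assert (Hbound : forall eps : posreal, Rabs (Re l) <= eps /\ Rabs (Im l) <= eps).
{ intros eps. destruct (is_derive_C_approx F z l Hder eps) as [d Hd].
  set (s := Rmin d r / 2).
  assert (Hs : 0 < s) by (unfold s; pose proof (Rmin_pos d r (cond_pos d) Hr); lra).
  assert (Hsd : s < d /\ s < r).
  { unfold s; pose proof (Rmin_l d r); pose proof (Rmin_r d r); pose proof (cond_pos d); lra. }
  assert (Hkey : forall h : C, Cmod h = s -> Rabs (Im (h * l)%C) <= eps * s).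
  { intros h Hh.
    pose proof (Im_le_Cmod (F (z + h) - F z - h * l)%C) as Hle.
    pose proof (Hd h ltac:(lra)) as Happrox.
    replace (Im (F (z + h) - F z - h * l)%C)
      with (Im (F (z + h)%C) - Im (F z) - Im (h * l)%C) in Hle
      by (destruct (F (z + h)%C), (F z), (h * l)%C; simpl; ring).
    rewrite HImz, (HIm h ltac:(lra)), Rminus_0_r, Rminus_0_l, Rabs_Ropp in Hle. rewrite <- Hh. lra. }
  assert (Hre : Cmod (RtoC s) = s) by (rewrite Cmod_R; apply Rabs_pos_eq; lra).
  assert (Him : Cmod (0, s) = s).
  { unfold Cmod; simpl. replace (0 * (0 * 1) + s * (s * 1)) with (s * s) by ring.
    apply sqrt_square; lra. }
  pose proof (Hkey _ Hre) as K1. pose proof (Hkey _ Him) as K2.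
  destruct l as [a b]; simpl in K1, K2 |- *.
  replace (s * b + 0 * a) with (s * b) in K1 by ring.
  replace (0 * b + s * a) with (s * a) in K2 by ring.
  rewrite Rabs_mult, Rabs_pos_eq in K1, K2 by lra.
  split; apply Rmult_le_reg_l with s; lra. }
destruct l as [a b]. unfold RtoC. f_equal; apply eq_0_of_Rabs_le_posreal; apply Hbound.
Qed.

Lemma is_derive_Re_ray (F : C -> C) (w : C) (t : R) :
  @is_derive C_AbsRing C_NormedModule F (RtoC t * w)%C (RtoC 0) ->
  is_derive (fun s => Re (F (RtoC s * w)%C)) t 0.
Proof.
intros Hder. apply is_derive_Reals. intros eps Heps.
pose proof (Cmod_ge_0 w) as Hw.
assert (Heps' : 0 < eps / (Cmod w + 1)) by (apply Rdiv_lt_0_compat; lra).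
destruct (is_derive_C_approx F _ _ Hder (mkposreal _ Heps')) as [d Hd]; simpl in Hd.
assert (Hdel : 0 < d / (Cmod w + 1)) by (apply Rdiv_lt_0_compat; [apply cond_pos | lra]).
exists (mkposreal _ Hdel); simpl. intros h Hh0 Hh.
apply Rabs_pos_lt in Hh0.
assert (Hhw : Cmod (RtoC h * w) = Rabs h * Cmod w) by (rewrite Cmod_mult, Cmod_R; easy).
assert (Hsmall : Cmod (RtoC h * w) < d).
{ rewrite Hhw. apply (Rmult_lt_compat_r (Cmod w + 1)) in Hh; [|lra].
  unfold Rdiv in Hh. rewrite Rmult_assoc, Rinv_l in Hh by lra. nra. }
specialize (Hd _ Hsmall).
replace (F (RtoC t * w + RtoC h * w) - F (RtoC t * w) - RtoC h * w * RtoC 0)%C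
  with (F (RtoC t * w + RtoC h * w) - F (RtoC t * w))%C in Hd by ring.
rewrite Hhw in Hd.
rewrite RtoC_plus, Cmult_plus_distr_r, Rminus_0_r.
pose proof (re_le_Cmod (F (RtoC t * w + RtoC h * w) - F (RtoC t * w))%C) as Hre.
replace (Re (F (RtoC t * w + RtoC h * w) - F (RtoC t * w))%C)
  with (Re (F (RtoC t * w + RtoC h * w)%C) - Re (F (RtoC t * w)%C)) in Hre
  by (destruct (F (RtoC t * w + RtoC h * w)%C), (F (RtoC t * w)%C); simpl; ring).
unfold Rdiv. rewrite Rabs_mult, Rabs_inv.
apply Rmult_lt_reg_r with (Rabs h); [lra|].
rewrite Rmult_assoc, Rinv_l, Rmult_1_r by lra.
assert (eps / (Cmod w + 1) * (Rabs h * Cmod w) < eps * Rabs h).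
{ apply Rmult_lt_reg_r with (Cmod w + 1); [lra|].
  replace (eps / (Cmod w + 1) * (Rabs h * Cmod w) * (Cmod w + 1))
    with (eps * Rabs h * Cmod w) by (field; lra).
  assert (0 < eps * Rabs h) by (apply Rmult_lt_0_compat; lra). nra. }
lra.
Qed.

Lemma Re_eq_of_is_derive_0_on_segment (F : C -> C) (w : C) :
  (forall t, 0 <= t <= 1 -> @is_derive C_AbsRing C_NormedModule F (RtoC t * w)%C (RtoC 0)) ->
  Re (F w) = Re (F 0%C).
Proof.
intros Hder.
pose proof (eq_is_derive (fun s => Re (F (RtoC s * w)%C)) 0 1
  (fun t Ht => is_derive_Re_ray F w t (Hder t Ht)) Rlt_0_1) as E.
simpl in E. rewrite Cmult_0_l, Cmult_1_l in E. now symmetry.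
Qed.

Lemma unit_disk_scal (t : R) (w : C) : 0 <= t <= 1 -> unit_disk w -> unit_disk (RtoC t * w)%C.
Proof.
unfold unit_disk. intros Ht Hw.
rewrite Cmod_mult, Cmod_R, Rabs_pos_eq by lra. pose proof (Cmod_ge_0 w). nra.
Qed.

Lemma caratheodory_pow (F : C -> C) :
  preserves_P F (fun z => z) -> forall n, caratheodory (fun z => (F z ^ n)%C).
Proof.
intros HP n. induction n as [|n IH].
- split; [|split]; simpl.
  + intros z _. apply ex_derive_const.
  + intros z _. lra.
  + reflexivity.
- exact (HP _ IH).
Qed.

Theorem proposition2p1 (F : C -> C) :
  analytic_on_disk F ->
  preserves_P F (fun z => z) ->
  forall z, unit_disk z -> F z = RtoC 1.
Proof.
intros HA HP z Hz.
pose proof (caratheodory_pow F HP) as Hpow.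
assert (Hreal : forall w, unit_disk w -> Im (F w) = 0).
{ intros w Hw. apply Im_eq_0_of_Re_pow_pos. intros n. now apply Hpow. }
assert (Hder : forall w, unit_disk w -> @is_derive C_AbsRing C_NormedModule F w (RtoC 0)).
{ intros w Hw. destruct (HA w Hw) as [l Hl].
  replace (RtoC 0) with l; [easy|].
  apply (is_derive_eq_0_of_Im_eq_0 F w l (1 - Cmod w)); [unfold unit_disk in Hw; lra | | easy].
  intros h Hh. apply Hreal. unfold unit_disk. pose proof (Cmod_triangle w h). lra. }
assert (HF0 : F 0%C = 1%C).
{ destruct (Hpow 1%nat) as [_ [_ E]]. simpl in E. now rewrite Cmult_1_r in E. }
pose proof (Re_eq_of_is_derive_0_on_segment F z
  (fun t Ht => Hder _ (unit_disk_scal t z Ht Hz))) as HRe.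
rewrite HF0 in HRe. pose proof (Hreal z Hz) as HIm.
destruct (F z) as [a b]; simpl in HRe, HIm. now subst.
Qed.
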